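(* Let $S=sgp^+\langle A\mid R\rangle$ with $A$ finite, let $L\subseteq A^+$, and suppose $(A,L)$ is a prefix-automatic structure for $S$. Let $e$ be a new symbol, $B=A\cup\{e\}$, $K=L\cup\{e\}$, and $S^1=sgp^+\langle A\cup\{e\}\mid R,\ ea=ae=a\ (a\in A),\ ee=e\rangle$. Then $(B,K)$ is a prefix-automatic structure for $S^1$.
   Context: $A^*$ is the free monoid on $A$ (empty word $\varepsilon$), $A^+=A^*\setminus\{\varepsilon\}$. $sgp^+\langle A\mid R\rangle$ denotes the semigroup $A^+$ modulo the congruence generated by $R$. A language is regular if accepted by a finite state automaton. Let $\$\notin A$, $A(2,\$)=(A\cup\{\$\})^2\setminus\{(\$,\$)\}$. For $\alpha,\beta\in A^*$, $(\alpha,\beta)\delta_A^R$ is the word over $A(2,\$)$ obtained by padding the shorter of $\alpha,\beta$ on the right with $\$$'s to equal length and reading the pairs of letters position by position. For a semigroup $S$ generated by finite $A$ with canonical epimorphism $\phi:A^+\to S$ and a regular $L\subseteq A^+$ with $\phi(L)=S$, write $\alpha=\beta$ if $\phi(\alpha)=\phi(\beta)$ (with $\alpha\varepsilon\equiv\alpha$), and for $a\in A\cup\{\varepsilon\}$ let $L_a^\$=\{(\alpha,\beta)\delta^R_A:\alpha,\beta\in L,\ \alpha a=\beta\}$. $(A,L)$ is an automatic structure if every $L_a^\$$ is regular; it is a prefix-automatic structure if moreover $\{(\alpha,\beta)\delta_A^R:\alpha\in L,\ \beta\in\mathrm{Pref}(L),\ \alpha=\beta\}$ is regular, $\mathrm{Pref}(L)$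 being the set of prefixes of words in $L$. For $S^1$ the map sends $e$ to the identity. *)

From mathcomp Require Import all_boot.
Set Implicit Arguments. Unset Strict Implicit. Unset Printing Implicit Defensive.

Definition lang (S : finType) := seq S -> Prop.

Definition regular (S : finType) (L : lang S) : Prop :=
  exists (Q : finType) (q0 : Q) (delta : Q -> S -> Q) (F : pred Q),
    forall w, L w <-> F (foldl delta q0 w).

Inductive cong (A : Type) (R : seq A -> seq A -> Prop) : seq A -> seq A -> Prop :=
| cong_base u v : R u v -> cong R u v
| cong_refl u : cong R u u
| cong_sym u v : cong R u v -> cong R v u
| cong_trans u v w : cong R u v -> cong R v w -> cong R u w
| cong_ctx x y u v : cong R u v -> cong R (x ++ u ++ y) (x ++ v ++ y).

(* The padded alphabet A(2,$): pairs over A u {$} (None = $) except ($,$). *)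
Definition pad2 (A : finType) := {p : option A * option A | p != (None, None)}.

Definition conv_raw (A : finType) (a b : seq A) : seq (option A * option A) :=
  mkseq (fun i => (nth None (map Some a) i, nth None (map Some b) i))
        (maxn (size a) (size b)).
Definition conv (A : finType) (a b : seq A) : seq (pad2 A) :=
  pmap insub (conv_raw a b).

Definition opt_word (A : Type) (a : option A) : seq A :=
  if a is Some x then [:: x] else [::].

(* L_a^$ for a in A u {eps} (None = eps). *)
Definition La (A : finType) (R : seq A -> seq A -> Prop) (L : lang A)
  (a : option A) : lang (pad2 A) :=
  fun w => exists al be, [/\ L al, L be, cong R (al ++ opt_word a) be & w = conv al be].

Definition Pref (A : Type) (L : seq A -> Prop) : seq A -> Prop :=
  fun b => exists g, L (b ++ g).

Definition automatic_structure (A : finType) (R : seq A -> seq A -> Prop)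
  (L : lang A) : Prop :=
  [/\ regular L,
      (forall w, L w -> w <> [::]),
      (forall w, w <> [::] -> exists u, L u /\ cong R w u) &
      (forall a : option A, regular (La R L a))].

Definition prefix_automatic_structure (A : finType) (R : seq A -> seq A -> Prop)
  (L : lang A) : Prop :=
  automatic_structure R L /\
  regular (fun w : seq (pad2 A) =>
    exists al be, [/\ L al, Pref L be, cong R al be & w = conv al be]).

(* Monoid S^1: new letter e encoded as None in alphabet option A. *)
Definition R1 (A : Type) (R : seq A -> seq A -> Prop) : seq (option A) -> seq (option A) -> Prop :=
  fun u v =>
    (exists u0 v0, [/\ R u0 v0, u = map Some u0 & v = map Some v0]) \/
    (exists a : A, u = [:: None; Some a] /\ v = [:: Some a]) \/
    (exists a : A, u = [:: Some a; None] /\ v = [:: Some a]) \/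
    (u = [:: None; None] /\ v = [:: None]).

Definition K1 (A : Type) (L : seq A -> Prop) : seq (option A) -> Prop :=
  fun w => (exists u, L u /\ w = map Some u) \/ w = [:: None].

From mathcomp Require Import all_boot.
From Stdlib Require Import Setoid.
Set Implicit Arguments. Unset Strict Implicit. Unset Printing Implicit Defensive.

(* Since e is a two-sided identity of S^1, two nonempty words over A + {e} are
   equal in S^1 exactly when their e-erasures are equal in S; a word made of e's
   only erases to the empty word, which is equal to no other word because no
   relator is empty.  Hence each padded language of (B, K) is the image of the
   corresponding language of (A, L) under the letter embedding, plus the pairs
   (e, v) with v in L representing the letter a, plus possibly (e, e).  The pairs
   (e, v) form a regular language because {v | (u0, v) in L_eps} is, for a fixed
   representative u0 in L of a.  For the prefix language, the nonempty prefixes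
   of words of K are e and the embedded nonempty prefixes of words of L. *)

Section RegularClosure.
Variable S : finType.
Implicit Types (L P : lang S).

Lemma regular_ext L1 L2 : regular L1 -> (forall w, L1 w <-> L2 w) -> regular L2.
Proof.
move=> [Q [q0 [d [F LF]]]] L12; exists Q, q0, d, F => w.
by rewrite -L12.
Qed.

Lemma regular0 : regular (fun _ : seq S => False).
Proof. by exists unit, tt, (fun _ _ => tt), pred0. Qed.

Lemma regular_seq1 (y : S) : regular (fun w => w = [:: y]).
Proof.
pose d (q : option bool) (x : S) :=
  if (q == Some false) && (x == y) then Some true else None.
exists (option bool), (Some false), d, (pred1 (Some true)) => w.
have dead v : foldl d None v = None by elim: v.
case: w => [|x [|z w]]; rewrite /= /d /=; first by [].
- by case: (x =P y) => [->|ne]; split=> // [[]].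
- by case: (x =P y) => _; rewrite dead.
Qed.

Lemma regularU L1 L2 : regular L1 -> regular L2 -> regular (fun w => L1 w \/ L2 w).
Proof.
move=> [Q1 [q1 [d1 [F1 LF1]]]] [Q2 [q2 [d2 [F2 LF2]]]].
pose d (q : Q1 * Q2) x := (d1 q.1 x, d2 q.2 x).
exists (Q1 * Q2)%type, (q1, q2), d, (fun q => F1 q.1 || F2 q.2) => w.
have -> q : foldl d q w = (foldl d1 q.1 w, foldl d2 q.2 w).
  by elim: w q => [|x w IHw] [p1 p2] //=; rewrite IHw.
by rewrite LF1 LF2; split => [[]->|/orP[]]; rewrite ?orbT; auto.
Qed.

End RegularClosure.

Definition map_hd (X Y : Type) (h0 h : X -> Y) (w : seq X) : seq Y :=
  if w is c :: v then h0 c :: map h v else [::].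

Section RegularImage.
Variables (X Y : finType) (h0 h : X -> Y).
Hypotheses (h0_inj : injective h0) (h_inj : injective h).

Lemma regular_map_hd (P : lang X) :
  regular P -> regular (fun w => exists2 v, P v & w = map_hd h0 h v).
Proof.
move=> [Q [q0 [d [F PF]]]].
pose hb (b : bool) := if b then h else h0.
pose shape (b : bool) := if b then map h else map_hd h0 h.
have shape_nil b : shape b [::] = [::] by case: b.
have shape_cons b c v : shape b (c :: v) = hb b c :: map h v by case: b.
(* [Some (q, b)]: [q] is the state of the automaton of [P] on the decoded
   prefix, [b] tells whether the head has been read; [None] is a sink. *)
pose d' (s : option (Q * bool)) y :=
  if s is Some (q, b) then omap (fun c => (d q c, true)) [pick c | hb b c == y] else None.
pose F' (s : option (Q * bool)) := if s is Some (q, _) then F q else false.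
exists (option (Q * bool)), (Some (q0, false)), d', F' => w.
have dead w' : foldl d' None w' = None by elim: w'.
suff run q b : F' (foldl d' (Some (q, b)) w) <-> exists2 v, F (foldl d q v) & w = shape b v.
  by rewrite run; split=> [[v /PF]|[v /PF]]; exists v.
elim: w q b => [|y w IHw] q b /=.
  by split=> [Fq|[[|c v] Fq]]; [exists [::] | | rewrite shape_cons].
case: pickP => [c /eqP hc|no_c] /=.
  rewrite IHw; split=> [[v Fv ->]|[[|c' v] Fv]]; rewrite ?shape_nil //.
    by exists (c :: v) => //; rewrite shape_cons hc.
  rewrite shape_cons => -[hc' ->]; exists v => //.
  suff -> : c = c' by [].
  by move: hc'; rewrite -hc; case: (b) => /= [/h_inj|/h0_inj].
rewrite dead; split=> // -[[|c v] _]; rewrite ?shape_nil ?shape_cons // => -[hc _].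
by have := no_c c; rewrite hc eqxx.
Qed.

End RegularImage.

Lemma regular_map (X Y : finType) (h : X -> Y) (P : lang X) :
  injective h -> regular P -> regular (fun w => exists2 v, P v & w = map h v).
Proof.
move=> h_inj /(regular_map_hd h_inj h_inj) reg; apply: regular_ext reg _ => w.
by split=> -[v Pv ->]; exists v => //; case: v {Pv}.
Qed.

Section Convolution.
Variable A : finType.
Implicit Types a b : seq A.

Lemma conv_raw_cons a b : (a, b) != ([::], [::]) ->
  conv_raw a b = (ohead a, ohead b) :: conv_raw (behead a) (behead b).
Proof.
move=> ab_nil; rewrite /conv_raw /mkseq.
have -> : maxn (size a) (size b) = (maxn (size (behead a)) (size (behead b))).+1.
  by case: a b ab_nil => [|x a] [|y b] //= _; rewrite ?maxnSS ?maxn0 ?max0n.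
rewrite /= -[1]addn0 iotaDl -map_comp; congr (_ :: _).
  by case: a b {ab_nil} => [|x a] [|y b].
by apply: eq_map => i /=; rewrite add1n -!nth_behead !behead_map.
Qed.

Lemma conv_raw_ind (P : seq A -> seq A -> Prop) :
  P [::] [::] ->
  (forall a b, (a, b) != ([::], [::]) -> P (behead a) (behead b) -> P a b) ->
  forall a b, P a b.
Proof.
move=> P_nil P_cons a b; elim: {a b}(size a + size b) {-2}a {-2}b (leqnn (size a + size b)).
  by move=> [|x a] [|y b].
move=> n IHn a b ab_le; have [[-> ->] //|ab_nil] := altP ((a, b) =P ([::], [::])).
apply: P_cons => //; apply: IHn.
case: a b ab_le ab_nil => [|x a] [|y b] //=.
all: by rewrite ?addSn ?addnS ?add0n ?addn0 // => /ltnW.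
Qed.

Lemma conv_raw_pad2 a b : all (fun p => p != (None, None)) (conv_raw a b).
Proof.
move: a b; apply: conv_raw_ind => // a b ab_nil IH.
by rewrite conv_raw_cons //= IH andbT; case: a b ab_nil {IH} => [|x a] [|y b].
Qed.

Lemma val_conv a b : map val (conv a b) = conv_raw a b.
Proof.
rewrite /conv; elim: (conv_raw a b) (conv_raw_pad2 a b) => //= p s IHs /andP[p_pad s_pad].
by rewrite insubT /= IHs.
Qed.

Lemma pmap_fst_conv_raw a b : pmap fst (conv_raw a b) = a.
Proof.
move: a b; apply: conv_raw_ind => // a b ab_nil IH.
by rewrite conv_raw_cons //=; case: a ab_nil IH => [|x a] //= _ ->.
Qed.

Lemma pmap_snd_conv_raw a b : pmap snd (conv_raw a b) = b.
Proof.
move: a b; apply: conv_raw_ind => // a b ab_nil IH.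
by rewrite conv_raw_cons //=; case: b ab_nil IH => [|y b] //= _ ->.
Qed.

Lemma conv_inj a b a' b' : conv a b = conv a' b' -> a = a' /\ b = b'.
Proof.
move=> /(congr1 (map val)); rewrite !val_conv => eq_raw.
split; first by rewrite -(pmap_fst_conv_raw a b) eq_raw pmap_fst_conv_raw.
by rewrite -(pmap_snd_conv_raw a b) eq_raw pmap_snd_conv_raw.
Qed.

Lemma regular_conv_section (M : lang (pad2 A)) (u0 : seq A) :
  regular M -> regular (fun v => M (conv u0 v)).
Proof.
move=> [Q [q0 [d [F MF]]]].
set n := size u0.
pose dr q (p : option A * option A) := if insub p is Some p' then d q p' else q.
have foldl_dr q s : foldl d q (pmap insub s) = foldl dr q s.
  by elim: s q => //= p s IHs q; rewrite /dr; case: insub => /=.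
pose next (i : 'I_n.+1) : 'I_n.+1 := inord (minn i.+1 n).
have drop_next (i : 'I_n.+1) : behead (drop i u0) = drop (next i) u0.
  rewrite -drop1 drop_drop add1n inordK ?ltnS ?geq_minr //.
  by case: leqP => // /ltnW n_le; rewrite !drop_oversize.
(* [(q, i)]: the automaton of [M] has read the first [i] letters of [u0]
   paired with the letters of [v] read so far; acceptance reads the rest of
   [u0] against padding. *)
pose d' (s : Q * 'I_n.+1) c := (dr s.1 (ohead (drop s.2 u0), Some c), next s.2).
pose F' (s : Q * 'I_n.+1) := F (foldl dr s.1 (conv_raw (drop s.2 u0) [::])).
exists (Q * 'I_n.+1)%type, (q0, ord0), d', F' => v.
suff run q i : F' (foldl d' (q, i) v) = F (foldl dr q (conv_raw (drop i u0) v)).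
  by rewrite run drop0 MF /conv foldl_dr.
elim: v q i => [|c v IHv] q i //=.
by rewrite IHv [conv_raw _ (c :: v)]conv_raw_cons ?drop_next //; case: drop.
Qed.

End Convolution.

Section AdjoinLetter.
Variable A : finType.
Implicit Types (u v : seq A) (c : A).

Definition lift_pair (p : option A * option A) : option (option A) * option (option A) :=
  (omap Some p.1, omap Some p.2).

Lemma lift_pair_pad2 (p : option A * option A) :
  p != (None, None) -> lift_pair p != (None, None).
Proof. by case: p => [[a|] [b|]]. Qed.

Definition pad2_some (p : pad2 A) : pad2 (option A) :=
  exist _ (lift_pair (val p)) (lift_pair_pad2 (valP p)).

(* Over the alphabet [option A], [Some None] is the new letter e, while [None]
   is the padding symbol. *)
Definition pad2_e c : pad2 (option A) := exist _ (Some None, Some (Some c)) isT.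
Definition pad2_blank c : pad2 (option A) := exist _ (None, Some (Some c)) isT.
Definition pad2_ee : pad2 (option A) := exist _ (Some None, Some None) isT.

Lemma pad2_some_inj : injective pad2_some.
Proof.
move=> p q /(congr1 val) /= pq; apply: val_inj; move: pq.
by case: p q => [[[a|] [b|]] ?] [[[a'|] [b'|]] ?] //= [] *; subst.
Qed.

Lemma pad2_e_inj : injective pad2_e.
Proof. by move=> c c' /(congr1 val) [->]. Qed.

Lemma pad2_blank_inj : injective pad2_blank.
Proof. by move=> c c' /(congr1 val) [->]. Qed.

Lemma conv_map_Some u v : conv (map Some u) (map Some v) = map pad2_some (conv u v).
Proof.
apply: (inj_map val_inj); rewrite -map_comp val_conv (map_comp lift_pair val) val_conv.
move: u v; apply: conv_raw_ind => // u v uv_nil IH.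
rewrite conv_raw_cons; last by case: u v uv_nil {IH} => [|x u] [|y v].
by rewrite (conv_raw_cons uv_nil) /= !behead_map IH; case: u v {uv_nil IH} => [|x u] [|y v].
Qed.

Lemma conv_e_cons c v :
  conv [:: None] (map Some (c :: v)) = map_hd pad2_e pad2_blank (c :: v).
Proof.
apply: (inj_map val_inj); rewrite val_conv conv_raw_cons //= -map_comp; congr (_ :: _).
by elim: v => //= y v IHv; rewrite conv_raw_cons //= IHv.
Qed.

Lemma conv_e_e : conv [:: None] [:: None] = [:: pad2_ee].
Proof. by apply: (inj_map val_inj); rewrite val_conv conv_raw_cons. Qed.

End AdjoinLetter.

Arguments pad2_some {A}.
Arguments pad2_ee {A}.

Section Congruence.
Variables (X : Type) (R : seq X -> seq X -> Prop).

Lemma cong_catl x u v : cong R u v -> cong R (x ++ u) (x ++ v).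
Proof. by move=> /(cong_ctx x [::]); rewrite !cats0. Qed.

Hypothesis R_nil : forall u v, R u v -> u <> [::] /\ v <> [::].

Lemma cong_nilp u v : cong R u v -> nilp u = nilp v.
Proof.
elim=> {u v} [u v /R_nil[]||u v _ ->|u v w _ -> _ ->|x y u v _ uv] //.
  by case: u => [|? ?] // _; case: v.
by rewrite !cat_nilp uv.
Qed.

Lemma cong_neq_nil u v : cong R u v -> u <> [::] -> v <> [::].
Proof. by move=> /cong_nilp uv u_ne /nilP; rewrite -uv => /nilP. Qed.

Lemma cong_nil_r u : cong R u [::] -> u = [::].
Proof. by move=> /cong_nilp /nilP. Qed.

End Congruence.

Lemma cong_hom (X Y : Type) (R : seq X -> seq X -> Prop) (R' : seq Y -> seq Y -> Prop)
    (f : seq X -> seq Y) :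
  {morph f : u v / u ++ v} -> (forall u v, R u v -> cong R' (f u) (f v)) ->
  forall u v, cong R u v -> cong R' (f u) (f v).
Proof.
move=> fM fR u v; elim=> {u v} [u v /fR //|u|u v _|u v w _ uv _ vw|x y u v _].
- exact: cong_refl.
- exact: cong_sym.
- exact: cong_trans uv vw.
- by rewrite !fM; apply: cong_ctx.
Qed.

Section AdjoinIdentity.
Variables (A : finType) (R : seq A -> seq A -> Prop).
Hypothesis R_nil : forall u v, R u v -> u <> [::] /\ v <> [::].

Definition erase (w : seq (option A)) : seq A := pmap id w.

Lemma erase_cat : {morph erase : u v / u ++ v}.
Proof. exact: pmap_cat. Qed.

Lemma erase_map_Some u : erase (map Some u) = u.
Proof. exact: map_pK. Qed.

Lemma R1_nil u v : R1 R u v -> u <> [::] /\ v <> [::].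
Proof.
case=> [[u0 [v0 [/R_nil[u0_nil v0_nil] -> ->]]]|[[a [-> ->]]|[[a [-> ->]]|[-> ->]]]] //.
by split; [case: u0 u0_nil|case: v0 v0_nil].
Qed.

Lemma cong_R1_erase u v : cong (R1 R) u v -> cong R (erase u) (erase v).
Proof.
apply: cong_hom => [|u1 u2]; first exact: erase_cat.
case=> [[u0 [v0 [uv -> ->]]]|[[a [-> ->]]|[[a [-> ->]]|[-> ->]]]]; [|exact: cong_refl..].
by rewrite !erase_map_Some; apply: cong_base.
Qed.

Lemma cong_R1_map_Some u v : cong R u v -> cong (R1 R) (map Some u) (map Some v).
Proof.
apply: cong_hom => [u1 u2|u1 u2 uv]; first exact: map_cat.
by apply: cong_base; left; exists u1, u2.
Qed.

Lemma cong_R1_eL w : w <> [::] -> cong (R1 R) (None :: w) w.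
Proof.
case: w => [//|x w] _; apply: (@cong_ctx _ _ [::] w [:: None; x] [:: x]); apply: cong_base.
by case: x => [a|]; [right; left; exists a|do 3 right].
Qed.

Lemma cong_R1_e w : erase w = [::] -> w <> [::] -> cong (R1 R) w [:: None].
Proof.
elim: w => [|[a|] w IHw] //= w_e _.
case: w IHw w_e => [|x w] IHw w_e; first exact: cong_refl.
exact: cong_trans (cong_R1_eL _) (IHw w_e _).
Qed.

Lemma cong_R1_map_erase w : erase w <> [::] -> cong (R1 R) w (map Some (erase w)).
Proof.
elim: w => [|[a|] w IHw] //= w_e.
- have [w_e0|/eqP w_ne] := eqVneq (erase w) [::].
    rewrite w_e0; case: w w_e0 {IHw w_e} => [|x w] w_e0; first exact: cong_refl.
    apply: cong_trans (cong_catl [:: Some a] (cong_R1_e w_e0 _)) _ => //.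
    by apply: cong_base; right; right; left; exists a.
  exact: (cong_catl [:: Some a] (IHw w_ne)).
- apply: cong_trans (cong_R1_eL _) (IHw w_e).
  by case: w w_e {IHw}.
Qed.

Lemma cong_R1E w1 w2 : w1 <> [::] -> w2 <> [::] ->
  cong (R1 R) w1 w2 <-> cong R (erase w1) (erase w2).
Proof.
move=> w1_ne w2_ne; split=> [|e12]; first exact: cong_R1_erase.
have e_nil := cong_nilp R_nil e12.
have [w1_e|/eqP w1_e] := eqVneq (erase w1) [::].
  have /nilP w2_e : nilp (erase w2) by rewrite -e_nil w1_e.
  exact: cong_trans (cong_R1_e w1_e w1_ne) (cong_sym (cong_R1_e w2_e w2_ne)).
have w2_e : erase w2 <> [::] by move/nilP; rewrite -e_nil => /nilP.
apply: cong_trans (cong_R1_map_erase w1_e) _.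
exact: cong_trans (cong_R1_map_Some e12) (cong_sym (cong_R1_map_erase w2_e)).
Qed.

End AdjoinIdentity.

Definition conv_lang (A : finType) (X Y : seq A -> Prop) (C : seq A -> seq A -> Prop) :
  lang (pad2 A) :=
  fun w => exists al be, [/\ X al, Y be, C al be & w = conv al be].

Section AdjoinIdentityLanguages.
Variables (A : finType) (X : seq A -> Prop).

Lemma K1_nil : (forall w, X w -> w <> [::]) -> forall w, K1 X w -> w <> [::].
Proof. by move=> X_nil w [[u [/X_nil u_nil ->]]|->] //; case: u u_nil. Qed.

Lemma regular_K1 : regular X -> regular (K1 X).
Proof.
move=> X_reg; apply: regularU (regular_seq1 None).
apply: regular_ext (regular_map Some_inj X_reg) _ => w.
by split=> [[u Xu ->]|[u [Xu ->]]]; exists u.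
Qed.

Lemma Pref_K1 w : w <> [::] ->
  Pref (K1 X) w <-> K1 (fun b => Pref X b /\ b <> [::]) w.
Proof.
move=> w_ne; split=> [[g [[u [Xu wg]]|wg]]|[[b [[[g Xbg] b_ne] ->]]|->]].
- have w_take : w = map Some (take (size w) u) by rewrite map_take -wg take_size_cat.
  left; exists (take (size w) u); split=> //; split.
    by exists (drop (size w) u); rewrite cat_take_drop.
  by move=> b_nil; apply: w_ne; rewrite w_take b_nil.
- by right; case: w w_ne wg => [|y [|z w]] //= _ [-> _].
- by exists (map Some g); left; exists (b ++ g); rewrite map_cat.
- by exists [::]; right.
Qed.

End AdjoinIdentityLanguages.

Section AdjoinIdentityRelations.
Variables (A : finType) (R : seq A -> seq A -> Prop) (X Y : seq A -> Prop).
Hypothesis R_nil : forall u v, R u v -> u <> [::] /\ v <> [::].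
Hypotheses (X_nil : forall w, X w -> w <> [::]) (Y_nil : forall w, Y w -> w <> [::]).

Definition conv_e_lang (s : seq A) : lang (pad2 (option A)) :=
  fun w => exists v, [/\ Y v, cong R s v & w = conv [:: None] (map Some v)].

Lemma conv_lang_K1 (t : seq (option A)) w :
  conv_lang (K1 X) (K1 Y) (fun al be => cong (R1 R) (al ++ t) be) w <->
  (exists2 w', conv_lang X Y (fun u v => cong R (u ++ erase t) v) w' & w = map pad2_some w')
  \/ conv_e_lang (erase t) w \/ (erase t = [::] /\ w = [:: pad2_ee]).
Proof.
split=> [[al [be [Kal Kbe albe ->]]]|].
  have al_ne : al ++ t <> [::] by case: al {albe} Kal => // /(K1_nil X_nil).
  move: albe; rewrite (cong_R1E R_nil al_ne (K1_nil Y_nil Kbe)) erase_cat.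
  case: Kal => [[u [Xu ->]]|->]; case: Kbe => [[v [Yv ->]]|->];
    rewrite ?erase_map_Some /= => uv.
  - by left; exists (conv u v); [exists u, v; split|rewrite conv_map_Some].
  - by case: u Xu (X_nil Xu) uv => // x u _ _ /(cong_nil_r R_nil).
  - by right; left; exists v.
  - by right; right; rewrite conv_e_e (cong_nil_r R_nil uv).
case=> [[_ [u [v [Xu Yv uv ->]]] ->]|[[v [Yv tv ->]]|[t_e ->]]].
- have [u_ne v_ne] := (X_nil Xu, Y_nil Yv).
  exists (map Some u), (map Some v); rewrite conv_map_Some.
  split=> //; [by left; exists u|by left; exists v|].
  apply/(cong_R1E R_nil); [by case: (u) u_ne|by case: (v) v_ne|].
  by rewrite erase_cat !erase_map_Some.
- exists [:: None], (map Some v); split; [by right|by left; exists v| |by []].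
  apply/(cong_R1E R_nil); [by []|by case: (v) (Y_nil Yv)|].
  by rewrite erase_map_Some.
- exists [:: None], [:: None]; split; [by right|by right| |by rewrite conv_e_e].
  by apply/(cong_R1E R_nil) => //; rewrite erase_cat t_e; apply: cong_refl.
Qed.

Lemma regular_conv_lang_K1 t :
  regular (conv_lang X Y (fun u v => cong R (u ++ erase t) v)) ->
  regular (conv_e_lang (erase t)) ->
  regular (conv_lang (K1 X) (K1 Y) (fun al be => cong (R1 R) (al ++ t) be)).
Proof.
move=> lift_reg e_reg; apply: regular_ext (fun w => iff_sym (conv_lang_K1 t w)).
apply: regularU (regular_map (@pad2_some_inj A) lift_reg) (regularU e_reg _).
case: (erase t) => [|x s].
  by apply: regular_ext (regular_seq1 pad2_ee) _ => w; split=> [|[]].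
by apply: regular_ext (regular0 _) _ => w; split=> // -[].
Qed.

Lemma regular_conv_e_lang_nil : regular (conv_e_lang [::]).
Proof.
apply: regular_ext (regular0 _) _ => w.
by split=> // -[v [/Y_nil v_ne /cong_sym/(cong_nil_r R_nil)]].
Qed.

End AdjoinIdentityRelations.

Section AdjoinIdentityStructure.
Variables (A : finType) (R : seq A -> seq A -> Prop) (L : seq A -> Prop).
Hypothesis R_nil : forall u v, R u v -> u <> [::] /\ v <> [::].
Hypothesis L_nil : forall w, L w -> w <> [::].
Hypothesis L_cover : forall w, w <> [::] -> exists u, L u /\ cong R w u.
Hypothesis La_reg : forall a, regular (La R L a).

Lemma K1_cover w : w <> [::] -> exists u, K1 L u /\ cong (R1 R) w u.
Proof.
move=> w_ne; have [w_e|/eqP w_e] := eqVneq (erase w) [::].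
  by exists [:: None]; split; [right|exact: cong_R1_e].
have [u [Lu wu]] := L_cover w_e.
exists (map Some u); split; first by left; exists u.
exact: cong_trans (cong_R1_map_erase R w_e) (cong_R1_map_Some wu).
Qed.

Lemma regular_conv_e_lang x : regular (conv_e_lang R L [:: x]).
Proof.
have [u0 [Lu0 xu0]] : exists u0, L u0 /\ cong R [:: x] u0 by apply: L_cover.
have conv_e_map_hd v :
    L v -> conv [:: None] (map Some v) = map_hd (@pad2_e A) (@pad2_blank A) v.
  by case: v => [/L_nil|c v _]; rewrite ?conv_e_cons.
have V_reg := regular_conv_section u0 (La_reg None).
apply: regular_ext (regular_map_hd (@pad2_e_inj A) (@pad2_blank_inj A) V_reg) _ => w.
split=> [[v [al [be [_ Lbe albe /conv_inj[u0_al v_be]]]] ->]|[v [Lv xv ->]]].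
  subst al be; exists v; split; rewrite ?conv_e_map_hd //.
  by rewrite cats0 in albe; apply: cong_trans xu0 albe.
exists v; last exact: conv_e_map_hd.
exists u0, v; split=> //; rewrite cats0.
exact: cong_trans (cong_sym xu0) xv.
Qed.

Lemma regular_La_K1 a : regular (La (R1 R) (K1 L) a).
Proof.
have t_e : erase (opt_word a) = opt_word (obind id a) by case: a => [[x|]|].
apply: regular_conv_lang_K1 => //; rewrite t_e; first exact: La_reg.
case: (obind id a) => [x|]; first exact: regular_conv_e_lang.
exact: regular_conv_e_lang_nil.
Qed.

Lemma regular_Pref_K1 :
  regular (conv_lang L (Pref L) (cong R)) ->
  regular (conv_lang (K1 L) (Pref (K1 L)) (cong (R1 R))).
Proof.
pose Y b := Pref L b /\ b <> [::].
have Y_nil w : Y w -> w <> [::] by case.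
move=> P_reg.
have PY_reg : regular (conv_lang L Y (fun u v => cong R (u ++ erase [::]) v)).
  apply: regular_ext P_reg _ => w.
  split=> [[u [v [Lu Pv uv ->]]]|[u [v [Lu [Pv _] uv ->]]]]; exists u, v;
    rewrite /= cats0 in uv *; split=> //.
  by split=> //; exact (cong_neq_nil R_nil uv (L_nil Lu)).
have e_reg := regular_conv_e_lang_nil R_nil Y_nil.
apply: regular_ext (regular_conv_lang_K1 R_nil L_nil Y_nil PY_reg e_reg) _.
move=> w; split=> [[al [be [Kal Kbe albe ->]]]|[al [be [Kal Pbe albe ->]]]]; exists al, be.
  by rewrite cats0 in albe; split=> //; apply/(Pref_K1 L (K1_nil Y_nil Kbe)).
have be_ne := cong_neq_nil (R1_nil R_nil) albe (K1_nil L_nil Kal).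
by rewrite cats0; split=> //; apply/(Pref_K1 L be_ne).
Qed.

End AdjoinIdentityStructure.

Theorem mainTheorem2 (A : finType) (R : seq A -> seq A -> Prop) (L : seq A -> Prop) :
  (forall u v, R u v -> u <> [::] /\ v <> [::]) ->
  prefix_automatic_structure R L ->
  prefix_automatic_structure (R1 R) (K1 L).
Proof.
move=> R_nil [[L_reg L_nil L_cover La_reg] Pref_reg].
split; first split.
- exact: regular_K1.
- exact: K1_nil.
- exact: K1_cover.
- exact: regular_La_K1.
- exact: regular_Pref_K1.
Qed.
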